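(* For every $t\geq 0$ let $Q_t$, $M_t$ and $\psi_t$ be real random variables (on a common probability space) such that $M_t\neq 0$ almost surely and $\psi_t$ is independent of $(Q_t,M_t)$. Suppose $\psi$ is a real random variable satisfying \[ \psi = Q_t + M_t\,\psi_t \quad \text{for all } t\geq 0, \] and such that $\psi$ has the same distribution as $\psi_t$ for all $t\geq 0$, and suppose further that $Q_t\to\psi$ in probability as $t\to\infty$. Then the distribution of $\psi$ has an atom if and only if $\psi$ is almost surely equal to a constant. *)

From HB Require Import structures.
From mathcomp Require Import all_boot all_order all_algebra.
From mathcomp Require Import all_classical all_reals all_analysis.
Set Implicit Arguments. Unset Strict Implicit. Unset Printing Implicit Defensive.
Import Order.TTheory GRing.Theory Num.Theory.
Import numFieldNormedType.Exports.
Local Open Scope classical_set_scope.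
Local Open Scope ring_scope.

Definition indep_rv_pair d (T : measurableType d) (R : realType)
  (P : probability T R) (X Y Z : T -> R) : Prop :=
  forall (A : set R) (B : set (R * R)%type),
    measurable A -> measurable B ->
    P (X @^-1` A `&` (fun x => (Y x, Z x)) @^-1` B)
    = (P (X @^-1` A) * P ((fun x => (Y x, Z x)) @^-1` B))%E.

Definition cvg_in_prob d (T : measurableType d) (R : realType)
  (P : probability T R) (X : R -> T -> R) (Y : T -> R) : Prop :=
  forall eps : R, 0 < eps ->
    (fun t => P [set x | eps <= `|X t x - Y x| ]) @ +oo --> 0%E.

From HB Require Import structures.
From mathcomp Require Import all_boot all_order all_algebra.
From mathcomp Require Import all_classical all_reals all_analysis.
From mathcomp Require Import measurable_realfun ring lra.
Import Order.TTheory GRing.Theory Num.Theory.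
Import numFieldNormedType.Exports.
Local Open Scope classical_set_scope.
Local Open Scope ring_scope.

(* If [psi] has an atom, it has an atom [b] of maximal mass [p]: only finitely
   many atoms weigh more than any positive amount. Integrating out [(Q_t, M_t)]
   by independence gives [p = P(psi = b) = E[P(psi = (b - Q_t) / M_t)]], an
   average of atom masses that are all at most [p]; hence [(b - Q_t) / M_t] is
   almost surely again an atom of maximal mass. If some such [b] is nonzero,
   these atoms lie in a bounded interval [[-r, r]], so [|Q_t - b| <= r |M_t|]
   a.s., while independence gives [p P(|M_t| >= e) <= P(|Q_t - psi| >= e |b|)],
   which tends to zero: [Q_t] converges to [b] in probability. Otherwise [0] is
   the only maximal atom and [Q_t = 0] a.s. Either way [psi], the limit in
   probability of [Q_t], is a.s. constant. *)

Set Implicit Arguments. Unset Strict Implicit. Unset Printing Implicit Defensive.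

Section measurable_level_sets.
Context d (T : measurableType d) (R : realType).

Lemma measurable_ge_cst (f : T -> R) (e : R) :
  measurable_fun setT f -> measurable [set x | e <= f x].
Proof. by move=> mf; rewrite -[X in measurable X]setTI -preimage_itvcy; exact: mf. Qed.

Lemma measurable_dist_ge (X Y : {mfun T >-> R}) (e : R) :
  measurable [set x | e <= `|X x - Y x|].
Proof.
by apply: measurable_ge_cst; apply: measurableT_comp => //; exact: measurable_funB.
Qed.

End measurable_level_sets.

Section ae_measure.
Context d (T : measurableType d) (R : realType) (mu : {measure set T -> \bar R}).
Local Open Scope ereal_scope.

Lemma le_measure_ae (A B : set T) : measurable A -> measurable B ->
  {ae mu, forall x, A x -> B x} -> mu A <= mu B.
Proof.
move=> mA mB [N [mN N0 ABN]].
have AB_N : A `<=` B `|` N.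
  by move=> x Ax; have [Bx|nBx] := pselect (B x); [left|right; apply: ABN => /(_ Ax)].
apply: (le_trans (le_measure _ _ _ AB_N)); rewrite ?inE //; first exact: measurableU.
apply: (le_trans (measureU2 _ _ _)) => //.
by rewrite -[leRHS]adde0 leeD2l // measure_le0; apply/eqP.
Qed.

Lemma eq_measure_ae (A B : set T) : measurable A -> measurable B ->
  {ae mu, forall x, A x <-> B x} -> mu A = mu B.
Proof.
move=> mA mB AB; apply/eqP; rewrite eq_le.
by apply/andP; split; apply: le_measure_ae => //; apply: filterS AB => x [].
Qed.

Lemma ae_eq_of_null_dist_ge (X Y : {mfun T >-> R}) :
  (forall e : R, (0 < e)%R -> mu [set x | e <= `|X x - Y x|]%R = 0) ->
  {ae mu, forall x, X x = Y x}.
Proof.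
move=> null.
have tail n : {ae mu, forall x, ~ (n.+1%:R^-1 <= `|X x - Y x|)%R}.
  by exists [set x | n.+1%:R^-1 <= `|X x - Y x|]%R; split => //;
    [exact: measurable_dist_ge|apply: null; rewrite invr_gt0|move=> x /= /contrapT].
apply: filterS (ae_foralln tail) => x small; apply/eqP; rewrite -subr_eq0 -normr_le0.
rewrite leNgt; apply/negP => /ltr_add_invr [n]; rewrite add0r => /ltW.
exact: small.
Qed.

End ae_measure.

Definition max_atom (R : realType) (mu : set R -> \bar R) (a : R) : Prop :=
  forall y, (mu [set y] <= mu [set a])%E.

Section atoms.
Context (R : realType) (mu : probability R R).
Local Open Scope ereal_scope.

Lemma no_injective_heavy_atoms (y : nat -> R) (p : R) : (0 < p)%R ->
  injective y -> (forall n, p%:E <= mu [set y n]) -> False.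
Proof.
move=> p0 yinj heavy; pose n := (Num.truncn p^-1).+1.
have : (1 < n%:R * p)%R by rewrite -ltr_pdivrMr // div1r truncnS_gt.
apply/negP; rewrite -leNgt -lee_fin.
have disj : trivIset setT (fun i => [set y i]).
  apply/trivIsetP => i j _ _ ij; apply/seteqP; split => // z [->] /yinj eqij.
  by rewrite eqij eqxx in ij.
have mU : measurable (\big[setU/set0]_(i < n) [set y i]).
  by apply: bigsetU_measurable => i _; exact: measurable_set1.
apply: (le_trans _ (probability_le1 mu mU)).
rewrite (measure_bigsetU mu (F := fun i => [set y i])) //.
apply: (@le_trans _ _ (\sum_(i < n) p%:E)).
  by rewrite sumEFin sumr_const card_ord mulr_natl.
by apply: lee_sum => i _; exact: heavy.
Qed.

Lemma heavy_atom_argmax (phi : R -> R) (p y0 : R) : (0 < p)%R ->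
  p%:E <= mu [set y0] ->
  exists2 y, p%:E <= mu [set y] & forall z, p%:E <= mu [set z] -> (phi z <= phi y)%R.
Proof.
move=> p0 heavy0; apply: contrapT => nomax.
have climb y : exists z, p%:E <= mu [set y] -> p%:E <= mu [set z] /\ (phi y < phi z)%R.
  have [heavy|] := pselect (p%:E <= mu [set y]); last by exists y.
  have /existsNP [z] : ~ forall z, p%:E <= mu [set z] -> (phi z <= phi y)%R.
    by move=> ub; apply: nomax; exists y.
  by move=> /not_implyP [heavyz /negP]; rewrite -ltNge; exists z.
have [g gP] := choice climb.
pose y n := iter n g y0.
have heavy n : p%:E <= mu [set y n] by elim: n => //= n /gP [].
have incr : {homo y : i j / (i < j)%N >-> (phi i < phi j)%R}.
  by apply: homo_ltn => [y1 y2 y3|n]; [exact: lt_trans|have [] := gP _ (heavy n)].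
apply: (no_injective_heavy_atoms p0 _ heavy) => i j yij.
by case: (ltngtP i j) => // ij; have := incr _ _ ij; rewrite yij ltxx.
Qed.

Lemma exists_max_atom (a0 : R) : 0 < mu [set a0] -> exists a, max_atom mu a.
Proof.
have atomE y : mu [set y] = (fine (mu [set y]))%:E.
  by rewrite fineK // fin_num_measure.
move=> pos0.
have /(heavy_atom_argmax (fun y => fine (mu [set y]))) : (0 < fine (mu [set a0]))%R.
  by rewrite -lte_fin -atomE.
rewrite -atomE => /(_ a0 (lexx _)) [a heavya amax]; exists a => y.
have [heavyy|] := boolP (mu [set a0] <= mu [set y]).
  by rewrite atomE [leRHS]atomE lee_fin amax.
by rewrite -ltNge => /ltW ya0; exact: le_trans ya0 heavya.
Qed.

End atoms.

Section integral_ub.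
Context d (T : measurableType d) (R : realType) (P : probability T R).
Local Open Scope ereal_scope.

Lemma integral_eq_ub_gap_null (G : T -> \bar R) (p c : R) :
  measurable_fun setT G -> (forall x, 0 <= G x) ->
  {ae P, forall x, G x <= p%:E} -> \int[P]_x G x = p%:E -> (0 < c)%R ->
  P [set x | G x <= (p - c)%:E] = 0.
Proof.
move=> mG G0 Gp IG c0; set B := [set x | _].
have p0 : (0 <= p)%R by rewrite -lee_fin -IG; exact: integral_ge0.
have mB : measurable B.
  by rewrite -[B]setTI; apply: measurable_lee => //; exact: measurable_cst.
have mcB : measurable_fun setT (fun x => c%:E * (\1_B x)%:E).
  by apply: emeasurable_funM => //; apply/measurable_EFinP; exact: measurable_indic.
have : \int[P]_x (G x + c%:E * (\1_B x)%:E) <= p%:E.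
  rewrite -[leRHS]mule1 -(probability_setT P) -integral_cst //.
  apply: ae_ge0_le_integral => //.
  - by move=> x _; rewrite adde_ge0 // mule_ge0 // lee_fin ltW.
  - exact: emeasurable_funD.
  apply: filterS Gp => x Gx _; rewrite indicE.
  have [/set_mem Bx|_] := boolP (x \in B); last by rewrite mule0 adde0.
  by rewrite mule1 -leeBrDr // -EFinB.
rewrite ge0_integralD //; last by move=> x _; rewrite mule_ge0 // lee_fin ltW.
rewrite ge0_integralZl //; last 2 first.
- by apply/measurable_EFinP; exact: measurable_indic.
- by rewrite lee_fin ltW.
rewrite integral_indic // setIT IG -[leRHS]adde0 leeD2lE //.
by rewrite pmule_rle0 ?lte_fin // measure_le0 => /eqP.
Qed.

Lemma ae_eq_ub_of_integral (G : T -> \bar R) (p : R) :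
  measurable_fun setT G -> (forall x, 0 <= G x) ->
  {ae P, forall x, G x <= p%:E} -> \int[P]_x G x = p%:E ->
  {ae P, forall x, G x = p%:E}.
Proof.
move=> mG G0 Gp IG.
have above n : {ae P, forall x, ~ G x <= (p - n.+1%:R^-1)%:E}.
  exists [set x | G x <= (p - n.+1%:R^-1)%:E]; split => //.
  - rewrite -[X in measurable X]setTI.
    by apply: measurable_lee => //; exact: measurable_cst.
  - by rewrite (integral_eq_ub_gap_null mG) // invr_gt0.
  - by move=> x /= /contrapT.
apply: filterS2 Gp (ae_foralln above) => x Gxp Gx_gt; apply/eqP; rewrite eq_le Gxp /=.
move: (G0 x) Gxp Gx_gt; case: (G x) => [r| |] //= _ rp Gx_gt.
rewrite lee_fin leNgt; apply/negP => /ltr_add_invr [n]; rewrite -ltrBrDr => /ltW.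
by rewrite -lee_fin => /Gx_gt.
Qed.

End integral_ub.

Section independence.
Context d (T : measurableType d) (R : realType) (P : probability T R).
Variables X Y Z : {RV P >-> R}.
Hypothesis XYZ_indep : indep_rv_pair P X Y Z.

Definition rv_pair (x : T) : R * R := (Y x, Z x).
HB.instance Definition _ := isMeasurableFun.Build _ _ _ _ rv_pair
  (measurable_fun_pair (measurable_funP Y) (measurable_funP Z)).

Definition rv_triple (x : T) : (R * R) * R := (rv_pair x, X x).
HB.instance Definition _ := isMeasurableFun.Build _ _ _ _ rv_triple
  (measurable_fun_pair (measurable_funP rv_pair) (measurable_funP X)).

Lemma distribution_rv_triple (S : set ((R * R) * R)) : measurable S ->
  distribution P rv_triple S = (distribution P rv_pair \x distribution P X)%E S.
Proof.
move=> mS; symmetry; apply: product_measure_unique => // A B mA mB /=.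
rewrite /pushforward muleC -XYZ_indep //; congr (P _).
by apply/seteqP; split => x [].
Qed.

Lemma indep_rv_pair_fubini (S : set ((R * R) * R)) : measurable S ->
  P (rv_triple @^-1` S) = (\int[P]_x distribution P X (xsection S (Y x, Z x)))%E.
Proof.
move=> mS; rewrite -[LHS]/(distribution P rv_triple S) distribution_rv_triple //.
rewrite /product_measure1 /= ge0_integral_distribution //.
exact: measurable_fun_xsection.
Qed.

Let affine_level (a : R) := [set u : (R * R) * R | u.1.1 + u.1.2 * u.2 = a].

Let measurable_affine_level a : measurable (affine_level a).
Proof.
have mf : measurable_fun setT (fun u : (R * R) * R => u.1.1 + u.1.2 * u.2).
  apply: measurable_funD; first exact: measurableT_comp.
  by apply: measurable_funM => //; exact: measurableT_comp.
by rewrite -[X in measurable X]setTI; exact: mf (measurable_set1 a).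
Qed.

Lemma measurable_fun_prob_affine_level (a : R) :
  measurable_fun setT (fun x => distribution P X [set y | Y x + Z x * y = a]).
Proof.
have -> : (fun x => distribution P X [set y | Y x + Z x * y = a]) =
    (fun u => distribution P X (xsection (affine_level a) u)) \o rv_pair.
  by apply/funext => x /=; rewrite xsectionE.
exact: measurableT_comp (measurable_fun_xsection _ (measurable_affine_level a)) _.
Qed.

Lemma prob_affine_eq_integral (a : R) :
  P [set x | Y x + Z x * X x = a] =
  (\int[P]_x distribution P X [set y | Y x + Z x * y = a]%R)%E.
Proof.
rewrite -[LHS]/(P (rv_triple @^-1` affine_level a)) indep_rv_pair_fubini //.
by under eq_integral do rewrite xsectionE.
Qed.

Lemma atom_mul_tail_le (psi : {RV P >-> R}) (a e : R) :
  {ae P, forall x, psi x = Y x + Z x * X x} ->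
  (forall A, measurable A -> distribution P psi A = distribution P X A) ->
  (P [set x | psi x = a] * P [set x | e <= `|Z x|]%R <=
   P [set x | e * `|a| <= `|Y x - psi x|]%R)%E.
Proof.
move=> psiE psiX.
have mB : measurable [set u : R * R | e <= `|u.2|].
  by apply: measurable_ge_cst; exact: measurableT_comp.
rewrite -[P [set x | psi x = a]]/(distribution P psi [set a]) psiX //.
rewrite -[P [set x | e <= _]]/(P (rv_pair @^-1` [set u | e <= `|u.2|])).
rewrite -XYZ_indep //; apply: le_measure_ae.
- exact: measurableI (measurable_funPTI X (measurable_set1 a))
    (measurable_funPTI rv_pair mB).
- exact: measurable_dist_ge.
apply: filterS psiE => x psixE [/= Xa Ze] /=.
by rewrite psixE Xa opprD addNKr normrN normrM ler_wpM2r.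
Qed.

End independence.

Section convergence_in_probability.
Context d (T : measurableType d) (R : realType) (P : probability T R).
Local Open Scope ereal_scope.

Lemma cvg_in_prob_dominated (Q : R -> T -> R) (X Y : T -> R) :
  cvg_in_prob P Q X ->
  (forall e : R, (0 < e)%R -> exists K delta : R, (0 < delta)%R /\
     \forall t \near +oo%R, P [set x | e <= `|Q t x - Y x|]%R <=
                          K%:E * P [set x | delta <= `|Q t x - X x|]%R) ->
  cvg_in_prob P Q Y.
Proof.
move=> QX dom e e0; have [K [delta [delta0 bound]]] := dom e e0.
pose h t := K%:E * P [set x | delta <= `|Q t x - X x|]%R.
apply: (squeeze_cvge (f := cst 0) (h := h)).
- by apply: filterS bound => t tb; rewrite /= measure_ge0 tb.
- by apply: cvg_cst.
- by rewrite -(mule0 K%:E); apply: cvgeZl => //; exact: QX.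
Qed.

Lemma cvg_in_prob_ae_unique (Q : R -> {RV P >-> R}) (X Y : {RV P >-> R}) :
  cvg_in_prob P (fun t => Q t : T -> R) X -> cvg_in_prob P (fun t => Q t : T -> R) Y ->
  {ae P, forall x, X x = Y x}.
Proof.
move=> QX QY; apply: ae_eq_of_null_dist_ge => e e0.
apply/eqP; rewrite eq_le measure_ge0 andbT -(adde0 0).
have e20 : (0 < e / 2)%R by rewrite divr_gt0.
apply: cvge_ge (cvgeD _ (QX _ e20) (QY _ e20)) => //.
apply: nearW => t.
apply: le_trans (measureU2 _ (measurable_dist_ge _ _ _) (measurable_dist_ge _ _ _)).
apply: le_measure; rewrite ?inE; try exact: measurable_dist_ge.
  by apply: measurableU; exact: measurable_dist_ge.
move=> x /= exy; have : (e <= `|Q t x - X x| + `|Q t x - Y x|)%R.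
  by apply: le_trans exy _; rewrite (le_trans (ler_distD (Q t x) _ _)) // distrC.
have [|] := leP (e / 2)%R `|Q t x - X x|%R; [left|right]; lra.
Qed.

End convergence_in_probability.

Section affine_fixed_point.
Context d (T : measurableType d) (R : realType) (P : probability T R).
Variables (Q M psit : R -> {RV P >-> R}) (psi : {RV P >-> R}).
Hypothesis M_neq0 : forall t : R, 0 <= t -> {ae P, forall x, M t x != 0}.
Hypothesis indep : forall t : R, 0 <= t -> indep_rv_pair P (psit t) (Q t) (M t).
Hypothesis psiE :
  forall t : R, 0 <= t -> {ae P, forall x, psi x = Q t x + M t x * psit t x}.
Hypothesis psit_psi : forall t : R, 0 <= t -> forall A, measurable A ->
  distribution P psi A = distribution P (psit t) A.
Hypothesis Q_psi : cvg_in_prob P (fun t => Q t : T -> R) psi.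

Let mu := distribution P psi.

Let muE y : mu [set y] = (fine (mu [set y]))%:E.
Proof. by rewrite fineK // fin_num_measure. Qed.

Lemma max_atom_preimage_ae (b t : R) : 0 <= t -> max_atom mu b ->
  {ae P, forall x, max_atom mu ((b - Q t x) / M t x)}.
Proof.
move=> t0 bmax.
pose G x := distribution P (psit t) [set y | Q t x + M t x * y = b].
have GE : {ae P, forall x, G x = mu [set (b - Q t x) / M t x]}.
  apply: filterS (M_neq0 t0) => x Mx0; rewrite /G /mu (psit_psi t0) //.
  congr (distribution P (psit t) _); apply/seteqP; split => y /=.
    by move=> <-; field.
  by move=> ->; field.
have IG : (\int[P]_x G x = (fine (mu [set b]))%:E)%E.
  rewrite -muE -prob_affine_eq_integral; last exact: indep.
  rewrite -[mu _]/(P (psi @^-1` [set b])); apply/esym/eq_measure_ae.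
  - exact: measurable_funPTI.
  - have mf : measurable_fun setT (fun x => Q t x + M t x * psit t x).
      by apply: measurable_funD => //; exact: measurable_funM.
    by rewrite -[X in measurable X]setTI; exact: mf (measurable_set1 b).
  by apply: filterS (psiE t0) => x /= ->.
have Gb : {ae P, forall x, (G x <= (fine (mu [set b]))%:E)%E}.
  by apply: filterS GE => x ->; rewrite -muE.
have := ae_eq_ub_of_integral (measurable_fun_prob_affine_level _ _ _ _)
  (fun x => measure_ge0 _ _) Gb IG.
apply: filterS2 GE => x GxE Gxp y.
have : (mu [set y] <= mu [set ((b - Q t x) / M t x)%R])%E by rewrite -GxE /G Gxp -muE.
exact.
Qed.

Lemma nonzero_max_atom_ae (b : R) : b != 0 -> (0 < mu [set b])%E -> max_atom mu b ->
  {ae P, forall x, psi x = b}.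
Proof.
move=> b0 mub_gt0 bmax; set p := fine (mu [set b]).
have p0 : 0 < p by rewrite -lte_fin -muE.
have heavy_b : (p%:E <= mu [set b])%E by rewrite -muE.
have [y _ ymax] := heavy_atom_argmax Num.norm p0 heavy_b.
set r := `|y|; have r0 : 0 < r by rewrite (lt_le_trans _ (ymax _ heavy_b)) ?normr_gt0.
have Q_b : cvg_in_prob P (fun t => Q t : T -> R) (cst b).
  apply: (cvg_in_prob_dominated Q_psi) => e e0.
  exists p^-1, (e / r * `|b|); split.
    by apply: mulr_gt0; [exact: divr_gt0|rewrite normr_gt0].
  apply: filterS (nbhs_pinfty_ge (real0 R)) => t t0.
  have close : (P [set x | e <= `|Q t x - b|]%R <= P [set x | e / r <= `|M t x|]%R)%E.
    apply: le_measure_ae.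
    - exact: (measurable_dist_ge (Q t) (cst b)).
    - by apply: measurable_ge_cst; exact: measurableT_comp.
    apply: filterS2 (M_neq0 t0) (max_atom_preimage_ae t0 bmax) => x Mx0 xmax /= dev.
    have : `|(b - Q t x) / M t x| <= r.
      by apply: ymax; apply: le_trans heavy_b (xmax b).
    rewrite normrM normfV ler_pdivrMr ?normr_gt0 // distrC => devr.
    by rewrite ler_pdivrMr // mulrC (le_trans dev devr).
  have := atom_mul_tail_le (indep t0) b (e / r) (psiE t0) (psit_psi t0).
  by rewrite -[P _]/(mu [set b]) muE -lee_pdivlMl // => /(le_trans close).
by apply: cvg_in_prob_ae_unique Q_psi Q_b.
Qed.

Lemma sole_max_atom0_ae : max_atom mu 0 -> (forall b, max_atom mu b -> b = 0) ->
  {ae P, forall x, psi x = 0}.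
Proof.
move=> max0 sole0.
have Q_0 : cvg_in_prob P (fun t => Q t : T -> R) (cst 0).
  apply: (cvg_in_prob_dominated Q_psi) => e e0; exists 0, 1; split => //.
  apply: filterS (nbhs_pinfty_ge (real0 R)) => t t0; rewrite mul0e -(measure0 P).
  apply: le_measure_ae => //; first exact: (measurable_dist_ge (Q t) (cst 0)).
  apply: filterS2 (M_neq0 t0) (max_atom_preimage_ae t0 max0) => x Mx0 xmax /=.
  move: (sole0 _ xmax) => /eqP.
  rewrite mulf_eq0 invr_eq0 (negbTE Mx0) orbF sub0r oppr_eq0 => /eqP ->.
  by rewrite subr0 normr0 leNgt e0.
by apply: cvg_in_prob_ae_unique Q_psi Q_0.
Qed.

End affine_fixed_point.

Theorem lemma2p1 (d : measure_display) (T : measurableType d) (R : realType)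
  (P : probability T R)
  (Q M psit : R -> {RV P >-> R}) (psi : {RV P >-> R}) :
  (forall t : R, 0 <= t -> {ae P, forall x, M t x != 0}) ->
  (forall t : R, 0 <= t -> indep_rv_pair P (psit t) (Q t) (M t)) ->
  (forall t : R, 0 <= t -> {ae P, forall x, psi x = Q t x + M t x * psit t x}) ->
  (forall t : R, 0 <= t -> forall A : set R, measurable A ->
     distribution P psi A = distribution P (psit t) A) ->
  cvg_in_prob P (fun t => (Q t : T -> R)) psi ->
  ((exists a : R, (0 < distribution P psi [set a])%E) <->
   (exists c : R, {ae P, forall x, psi x = c})).
Proof.
move=> M_neq0 indep psiE psit_psi Q_psi; split => [[a0 atom_a0]|[c psi_c]].
  have [a amax] := exists_max_atom atom_a0.
  have [[b [b0 bmax]]|no_nonzero_max] :=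
    pselect (exists b : R, b != 0 /\ max_atom (distribution P psi) b).
    have atom_b := lt_le_trans atom_a0 (bmax a0).
    exists b.
    exact: (nonzero_max_atom_ae M_neq0 indep psiE psit_psi Q_psi b0 atom_b bmax).
  have sole0 (b : R) : max_atom (distribution P psi) b -> b = 0.
    by move=> bmax; have [//|b0] := eqVneq b 0; case: no_nonzero_max; exists b.
  exists 0; apply: (sole_max_atom0_ae M_neq0 indep psiE psit_psi Q_psi _ sole0).
  by rewrite -(sole0 a amax).
exists c; apply: (@lt_le_trans _ _ (P setT)); first by rewrite probability_setT lte01.
by apply: le_measure_ae => //; apply: filterS psi_c => x + _.
Qed.
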